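(* Let $K$ be an infinite commutative domain and $R$ a unital associative $K$-algebra on which $K$ acts torsion-freely. Suppose $(R,\cdot)$ satisfies a semigroup identity $u=v$, and write $u=au'b$, $v=av'b$ with $a,b$ (possibly empty) words and $u',v'$ words such that $u'=v'$ is reduced. Then $(R,\cdot)$ satisfies $u'=v'$.
   Context: A semigroup identity $u=v$ ($u\neq v$ words in the free semigroup on variables $x_1,x_2,\dots$) holds in a semigroup if both sides agree under every substitution. The identity $u'=v'$ is reduced if the first letters of $u'$ and $v'$ differ and the last letters of $u'$ and $v'$ differ. *)

From mathcomp Require Import all_boot all_algebra.
Set Implicit Arguments. Unset Strict Implicit. Unset Printing Implicit Defensive.
Import GRing.Theory.
Local Open Scope ring_scope.

(* A word in the free semigroup on variables x_0, x_1, ... is a non-empty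
   sequence of variable indices. *)
Definition word := seq nat.

Definition eval_word (S : pzRingType) (s : nat -> S) (w : word) : S :=
  \prod_(i <- w) s i.

Definition satisfies (S : pzRingType) (u v : word) : Prop :=
  forall s : nat -> S, eval_word s u = eval_word s v.

Definition semigroup_identity (u v : word) : Prop :=
  [/\ u != [::], v != [::] & u != v].

Definition reduced (u v : word) : Prop :=
  exists x u1 y v1, u = x :: u1 /\ v = y :: v1 /\ x != y /\ last x u1 != last y v1.

Definition infinite_type (T : eqType) : Prop :=
  forall s : seq T, exists x : T, x \notin s.

Definition torsion_free (K : pzRingType) (M : lmodType K) : Prop :=
  forall (k : K) (m : M), k *: m = 0 -> k = 0 \/ m = 0.

From mathcomp Require Import all_boot all_algebra.
Set Implicit Arguments. Unset Strict Implicit. Unset Printing Implicit Defensive.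
Local Open Scope ring_scope.
Import GRing.Theory.

(* Substituting x_i := t + (s_i - 1) for a central indeterminate t turns both
   sides of the identity into polynomials over R.  They agree at the infinitely
   many points t = l%:A (l : K), so by a Vandermonde argument in the
   K-torsion-free module R they are equal.  Both are products of monic linear
   factors, hence the common factors coming from a and b cancel, and evaluating
   at t = 1 gives back the substitution s. *)

Lemma infinite_uniq_seq (T : eqType) (n : nat) :
  infinite_type T -> exists t : seq T, uniq t /\ size t = n.
Proof.
move=> T_inf; elim: n => [|n [t [t_uniq t_size]]]; first by exists [::].
have [x x_notin_t] := T_inf t.
by exists (x :: t); rewrite /= x_notin_t t_uniq t_size.
Qed.

Lemma horner_prod_central (A : nzRingType) (x : A) (I : Type) (r : seq I)
    (F : I -> {poly A}) :
  (forall y, GRing.comm x y) -> (\prod_(i <- r) F i).[x] = \prod_(i <- r) (F i).[x].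
Proof.
move=> x_central; elim: r => [|i r IH]; first by rewrite !big_nil hornerC.
by rewrite !big_cons hornerM_comm ?IH //; apply: x_central.
Qed.

Section TorsionFreeModule.
Variables (K : idomainType) (M : lmodType K).

Lemma det_scaler_eq0 (n : nat) (V : 'M[K]_n) (c : 'I_n -> M) (k : 'I_n) :
  (forall j, \sum_i V i j *: c i = 0) -> \det V *: c k = 0.
Proof.
move=> V_ann.
have -> : \det V *: c k = \sum_i (V *m \adj V) i k *: c i.
  rewrite mul_mx_adj (bigD1 k) //= big1 ?addr0 => [|i ik].
    by rewrite mxE eqxx mulr1n.
  by rewrite mxE (negbTE ik) mulr0n scale0r.
under eq_bigr => i _ do rewrite mxE scaler_suml.
rewrite exchange_big big1 // => j _.
under eq_bigr => i _ do rewrite mulrC -scalerA.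
by rewrite -scaler_sumr V_ann scaler0.
Qed.

Hypotheses (K_inf : infinite_type K) (M_tf : torsion_free M).

Lemma power_sum_eq0 (n : nat) (c : 'I_n -> M) :
  (forall l : K, \sum_(i < n) l ^+ i *: c i = 0) -> forall i, c i = 0.
Proof.
move=> c_ann k.
have [t [t_uniq t_size]] := infinite_uniq_seq n K_inf.
pose V := Vandermonde n (\row_(j < n) t`_j).
have detV_neq0 : \det V != 0.
  rewrite det_Vandermonde; apply/prodf_neq0 => i _; apply/prodf_neq0 => j ij.
  rewrite !mxE subr_eq0 nth_uniq ?t_size //.
  by apply: contraTneq ij => /val_inj ->; rewrite ltnn.
have V_ann j : \sum_i V i j *: c i = 0.
  by rewrite -[RHS](c_ann t`_j); apply: eq_bigr => i _; rewrite !mxE.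
by case: (M_tf (det_scaler_eq0 k V_ann)) => // /eqP; rewrite (negbTE detV_neq0).
Qed.

End TorsionFreeModule.

Section TorsionFreeAlgebra.
Variables (K : idomainType) (R : algType K).
Hypotheses (K_inf : infinite_type K) (R_tf : torsion_free R).

Lemma horner_scalar (p : {poly R}) (l : K) :
  p.[l%:A] = \sum_(i < size p) l ^+ i *: p`_i.
Proof.
rewrite horner_coef; apply: eq_bigr => i _.
by rewrite exprZn expr1n mulr_algr.
Qed.

Lemma poly_eq0_of_horner_scalar (p : {poly R}) :
  (forall l : K, p.[l%:A] = 0) -> p = 0.
Proof.
move=> p_ann; apply/polyP => i; rewrite coef0.
have [i_lt|i_ge] := ltnP i (size p); last exact: nth_default.
apply: (power_sum_eq0 K_inf R_tf (c := fun j : 'I_(size p) => p`_j) _ (Ordinal i_lt)).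
by move=> l; rewrite -horner_scalar.
Qed.

Definition subst_poly (s : nat -> R) (w : word) : {poly R} :=
  \prod_(i <- w) ('X + (s i - 1)%:P).

Lemma subst_poly_monic (s : nat -> R) (w : word) : subst_poly s w \is monic.
Proof. by apply: monic_prod => i _; apply: monicXaddC. Qed.

Lemma subst_poly_cat (s : nat -> R) (a w b : word) :
  subst_poly s (a ++ w ++ b) = subst_poly s a * subst_poly s w * subst_poly s b.
Proof. by rewrite /subst_poly !big_cat /= mulrA. Qed.

Lemma horner_subst_poly (s : nat -> R) (w : word) (x : R) :
  (forall y, GRing.comm x y) ->
  (subst_poly s w).[x] = eval_word (fun i => x + (s i - 1)) w.
Proof.
move=> x_central; rewrite horner_prod_central //.
by apply: eq_bigr => i _; rewrite hornerD hornerX hornerC.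
Qed.

Lemma satisfies_cancel (a b u v : word) :
  satisfies R (a ++ u ++ b) (a ++ v ++ b) -> satisfies R u v.
Proof.
move=> R_auvb s.
have E : subst_poly s (a ++ u ++ b) = subst_poly s (a ++ v ++ b).
  apply/eqP; rewrite -subr_eq0; apply/eqP/poly_eq0_of_horner_scalar => l.
  by rewrite hornerD hornerN !horner_subst_poly ?R_auvb ?subrr //; apply: comm_alg.
rewrite !subst_poly_cat in E.
move/(monic_rreg (subst_poly_monic s b))/(monic_lreg (subst_poly_monic s a)) in E.
have s_at1 w : (subst_poly s w).[1] = eval_word s w.
  rewrite horner_subst_poly => [|y]; last exact/commr_sym/commr1.
  by apply: eq_bigr => i _; rewrite addrC subrK.
by rewrite -!s_at1 E.
Qed.

End TorsionFreeAlgebra.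

Theorem proposition1p4 (K : idomainType) (R : algType K)
    (u v a b u' v' : word) :
  infinite_type K ->
  torsion_free R ->
  semigroup_identity u v ->
  satisfies R u v ->
  u = a ++ u' ++ b ->
  v = a ++ v' ++ b ->
  reduced u' v' ->
  satisfies R u' v'.
Proof.
move=> K_inf R_tf _ R_auvb u_def v_def _; subst u v.
exact: (satisfies_cancel K_inf R_tf R_auvb).
Qed.
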